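(* Assume $f_0,f_1\in \mathrm{PL}_0(\mathbf{I})$ generate a standard isomorphic copy of $F$. Let $(a,c)$ be an orbital of $f_0$ and let $(b_1,d_1),\dots,(b_n,d_n)$ be the orbitals of $f_1$ contained in $(a,c)$, in increasing order. If $(a,c)$ is an up-bump of $f_0$ and $r$ is the minimal number in $(a,c)$ with $rf_0=rf_1$, then $b_1f_0\ge r$. If $(a,c)$ is a down-bump of $f_0$ and $r$ is the maximal number in $(a,c)$ with $rf_0=rf_1$, then $d_nf_0\le r$.
   Context: $\mathrm{PL}_0(\mathbf{I})$ is the group of orientation-preserving piecewise-linear homeomorphisms of $[0,1]$ with finitely many points of non-differentiability; functions act on the right ($tf=f(t)$). The orbitals of $f$ are the connected components (open intervals) of $\operatorname{Supp}(f)=\{x: xf\ne x\}$; an orbital $A$ is an up-bump (resp. down-bump) if $xf>x$ (resp. $xf<x$) for all $x\in A$. Thompson's group $F=\langle x_0,x_1\mid [x_0x_1^{-1},x_1^{x_0}]=[x_0x_1^{-1},x_1^{x_0^2}]=1\rangle$, with $a^b=b^{-1}ab$, $[a,b]=aba^{-1}b^{-1}$; $f_0,f_1$ generate a standard isomorphic copy of $F$ if $\langle f_0,f_1\rangle\cong F$ via an isomorphism with $x_0\mapsto f_0$, $x_1\mapsto f_1$. *)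

From Stdlib Require Import Reals Lra List Relations.
Import ListNotations.
Open Scope R_scope.

(** PL_0(I): orientation-preserving piecewise-linear homeomorphisms of [0,1]
    with finitely many breakpoints.  Only the values on [0,1] matter. *)
Definition PL0 (f : R -> R) : Prop :=
  f 0 = 0 /\ f 1 = 1 /\
  (forall x y, 0 <= x -> x < y -> y <= 1 -> f x < f y) /\
  exists (k : nat) (p : nat -> R),
    p 0%nat = 0 /\ p k = 1 /\
    (forall i, (i < k)%nat -> p i < p (S i)) /\
    (forall i, (i < k)%nat -> exists alpha beta : R,
        forall x, p i <= x <= p (S i) -> f x = alpha * x + beta).

Definition inverse_on_I (f g : R -> R) : Prop :=
  forall t, 0 <= t <= 1 -> g (f t) = t /\ f (g t) = t.

(** Orbitals: (a,c) is a component of Supp(f) = {x in [0,1] | xf <> x}. *)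
Definition orbital (f : R -> R) (a c : R) : Prop :=
  0 <= a /\ a < c /\ c <= 1 /\ f a = a /\ f c = c /\
  (forall x, a < x < c -> f x <> x).

Definition up_bump (f : R -> R) (a c : R) : Prop :=
  orbital f a c /\ forall x, a < x < c -> f x > x.

Definition down_bump (f : R -> R) (a c : R) : Prop :=
  orbital f a c /\ forall x, a < x < c -> f x < x.

(** Words in the generators x0 (false), x1 (true); the second component is
    the sign (true = positive exponent, false = inverse). *)
Definition letter := (bool * bool)%type.
Definition word := list letter.

Definition linv (l : letter) : letter := (fst l, negb (snd l)).
Definition winv (w : word) : word := rev (map linv w).

Definition X0 : word := [(false, true)].
Definition X1 : word := [(true, true)].
Definition X0i : word := [(false, false)].
Definition X1i : word := [(true, false)].

Definition wconj (a b : word) : word := winv b ++ a ++ b.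
Definition wcomm (a b : word) : word := a ++ b ++ winv a ++ winv b.

Definition relator1 : word := wcomm (X0 ++ X1i) (wconj X1 X0).
Definition relator2 : word := wcomm (X0 ++ X1i) (wconj X1 (X0 ++ X0)).

Inductive Fstep : word -> word -> Prop :=
| Fstep_free : forall p q l, Fstep (p ++ q) (p ++ [l; linv l] ++ q)
| Fstep_rel1 : forall p q, Fstep (p ++ q) (p ++ relator1 ++ q)
| Fstep_rel2 : forall p q, Fstep (p ++ q) (p ++ relator2 ++ q).

(** Equality in F = < x0, x1 | relator1, relator2 >. *)
Definition Fequiv : word -> word -> Prop := clos_refl_sym_trans word Fstep.

(** Right action: t (g1 g2 ... gk) = gk (... (g1 t)). *)
Definition eval_letter (f0 g0 f1 g1 : R -> R) (l : letter) : R -> R :=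
  match l with
  | (false, true) => f0
  | (false, false) => g0
  | (true, true) => f1
  | (true, false) => g1
  end.

Definition eval_word (f0 g0 f1 g1 : R -> R) (w : word) (t : R) : R :=
  fold_left (fun s l => eval_letter f0 g0 f1 g1 l s) w t.

(** f0, f1 (with inverses g0, g1) generate a standard isomorphic copy of F:
    x0 |-> f0, x1 |-> f1 induces a well-defined injective homomorphism. *)
Definition standard_F_copy (f0 g0 f1 g1 : R -> R) : Prop :=
  forall w1 w2 : word,
    Fequiv w1 w2 <->
    (forall t, 0 <= t <= 1 -> eval_word f0 g0 f1 g1 w1 t = eval_word f0 g0 f1 g1 w2 t).

(* Let h = x0 x1^-1, acting by t h = (t f0) f1^-1: its fixed points are the points where
   f0 and f1 agree, so r is fixed by h and h has no fixed point in (a, r).  The relators of F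
   say that h commutes with k = x1^x0 and k' = x1^(x0^2), whose fixed points are the images
   under f0, resp. f0^2, of the fixed points of f1; hence h and k (or k') permute each other's
   fixed points.  Suppose b1 f0 < r.  If b1 = a, the orbital (a, d1 f0) of k forces d1 f0 >= r,
   and then k' fixes r, so f1 fixes r f0^-2, a point of (a, d1).  If b1 > a and f1 fixes a,
   then k fixes [a, b1 f0] and moves (b1 f0, d1 f0), which forces h to fix b1 f0.  If f1 moves
   a, let (u, v) be its orbital around a: y = v f0 is a fixed point of k in (a, r) and k has no
   fixed point in [a, y); whichever of h, h^-1 moves y down lands on a fixed point of k below
   a, from which the other one cannot return to y.  The down-bump case is the mirror image
   under t |-> 1 - t. *)

From Stdlib Require Import Reals Lra Lia List Relations.
Import ListNotations.
Open Scope R_scope.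

Definition in_I (t : R) : Prop := 0 <= t <= 1.

Record order_iso_I (f g : R -> R) : Prop := {
  iso_maps : forall t, in_I t -> in_I (f t);
  iso_inv_maps : forall t, in_I t -> in_I (g t);
  iso_fg : forall t, in_I t -> f (g t) = t;
  iso_gf : forall t, in_I t -> g (f t) = t;
  iso_lt : forall x y, in_I x -> in_I y -> x < y -> f x < f y }.

Arguments iso_maps {f g}. Arguments iso_inv_maps {f g}.
Arguments iso_fg {f g}. Arguments iso_gf {f g}. Arguments iso_lt {f g}.

#[local] Hint Resolve iso_maps iso_inv_maps : core.

Section OrderIso.

Variables f g : R -> R.
Hypothesis iso : order_iso_I f g.

Lemma iso_le x y : in_I x -> in_I y -> x <= y -> f x <= f y.
Proof.
  intros Hx Hy [Hxy | <-]; [left; exact (iso_lt iso x y Hx Hy Hxy) | lra].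
Qed.

Lemma iso_lt_rev x y : in_I x -> in_I y -> f x < f y -> x < y.
Proof.
  intros Hx Hy Hf. destruct (Rlt_or_le x y) as [Hxy | Hyx]; [exact Hxy |].
  pose proof (iso_le y x Hy Hx Hyx). lra.
Qed.

Lemma iso_inj x y : in_I x -> in_I y -> f x = f y -> x = y.
Proof.
  intros Hx Hy Hf. rewrite <- (iso_gf iso x Hx), Hf. exact (iso_gf iso y Hy).
Qed.

Lemma iso_inv_fix y : in_I y -> f y = y -> g y = y.
Proof. intros Hy Hf. rewrite <- Hf at 1. exact (iso_gf iso y Hy). Qed.

Lemma order_iso_I_sym : order_iso_I g f.
Proof.
  destruct iso as [maps inv_maps fg gf lt]. split; auto.
  intros x y Hx Hy Hxy. apply iso_lt_rev; auto. rewrite !fg; auto.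
Qed.

End OrderIso.

Lemma order_iso_I_comp f f' g g' :
  order_iso_I f f' -> order_iso_I g g' ->
  order_iso_I (fun t => g (f t)) (fun t => f' (g' t)).
Proof.
  intros [fm fim ffi fif flt] [gm gim ggi gig glt]. split; intros; auto.
  - rewrite ffi; auto.
  - rewrite gig; auto.
Qed.

Definition commute_on_I (H K : R -> R) : Prop :=
  forall t, in_I t -> K (H t) = H (K t).

Section Commuting.

Variables H Hi K Ki : R -> R.
Hypotheses (isoH : order_iso_I H Hi) (isoK : order_iso_I K Ki) (HK : commute_on_I H K).

Lemma commute_on_I_sym : commute_on_I K H.
Proof. intros t Ht. symmetry. exact (HK t Ht). Qed.

Lemma commute_on_I_inv : commute_on_I Hi K.
Proof.
  intros t Ht. pose proof (iso_inv_maps isoH t Ht).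
  apply (iso_inj H Hi isoH); eauto.
  rewrite <- (HK (Hi t)) by exact H0. rewrite !(iso_fg isoH); eauto.
Qed.

Lemma commute_fix_image y : in_I y -> K y = y -> K (H y) = H y.
Proof. intros Hy Ky. rewrite HK, Ky; auto. Qed.

Lemma commute_right_end_le a q :
  in_I a -> in_I q -> a < q -> H a = a -> K q = q ->
  (forall y, a < y < q -> K y <> y) -> q <= H q.
Proof.
  intros Ia Iq aq Ha Kq Kmoves.
  destruct (Rle_or_lt q (H q)) as [Hq | Hq]; [exact Hq | exfalso].
  apply (Kmoves (H q)); [| exact (commute_fix_image q Iq Kq)].
  split; [rewrite <- Ha; exact (iso_lt isoH a q Ia Iq aq) | exact Hq].
Qed.

Lemma commute_left_end_le a B q :
  in_I a -> in_I q -> a <= B < q -> H a = a ->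
  (forall y, a <= y <= B -> K y = y) -> (forall y, B < y < q -> K y <> y) ->
  H B <= B.
Proof.
  intros Ia Iq aBq Ha Kfix Kmoves.
  assert (IB : in_I B) by (unfold in_I in *; lra).
  destruct (Rle_or_lt (H B) B) as [HB | HB]; [exact HB | exfalso].
  assert (qHB : q <= H B).
  { destruct (Rle_or_lt q (H B)) as [E | E]; [exact E | exfalso].
    apply (Kmoves (H B)); [lra |]. apply commute_fix_image; auto. apply Kfix; lra. }
  set (z := (B + q) / 2).
  assert (Iz : in_I z) by (unfold z, in_I in *; lra).
  assert (Hiz : a <= Hi z <= B).
  { pose proof (iso_inv_maps isoH z Iz).
    split; apply Rlt_le, (iso_lt_rev H Hi isoH); auto; rewrite (iso_fg isoH) by auto; unfold z; lra. }
  apply (Kmoves z); [unfold z; lra |].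
  rewrite <- (iso_fg isoH z Iz). apply commute_fix_image; [unfold in_I in *; lra | apply Kfix; lra].
Qed.

Lemma commute_gap_not_lt a y :
  in_I a -> in_I y -> K y = y -> Hi a < y ->
  (forall z, in_I z -> K z = z -> z < y -> z < a) -> ~ H y < y.
Proof.
  intros Ia Iy Ky Hia gap Hy.
  assert (IHy : in_I (H y)) by exact (iso_maps isoH y Iy).
  assert (Ha : H y < a) by (apply gap; auto; apply commute_fix_image; auto).
  pose proof (iso_lt (order_iso_I_sym H Hi isoH) (H y) a IHy Ia Ha) as E.
  rewrite (iso_gf isoH) in E by auto. lra.
Qed.

End Commuting.

Lemma commute_fixes_end H Hi K Ki a r :
  order_iso_I H Hi -> order_iso_I K Ki -> commute_on_I H K ->
  in_I a -> in_I r -> a < r -> H r = r -> K a = a ->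
  (forall s, a < s < r -> H s <> s) -> K r = r.
Proof.
  intros isoH isoK HK Ia Ir ar Hr Ka Hmoves.
  assert (KH : commute_on_I K H) by exact (commute_on_I_sym H K HK).
  assert (ge_r : forall L Li, order_iso_I L Li -> commute_on_I L H -> L a = a -> r <= L r).
  { intros L Li isoL LH La.
    destruct (Rle_or_lt r (L r)) as [E | E]; [exact E | exfalso].
    apply (Hmoves (L r)); [| exact (commute_fix_image L H LH r Ir Hr)].
    split; [rewrite <- La; exact (iso_lt isoL a r Ia Ir ar) | exact E]. }
  pose proof (ge_r K Ki isoK KH Ka) as Kr.
  pose proof (ge_r Ki K (order_iso_I_sym K Ki isoK) (commute_on_I_inv K Ki H Hi isoK isoH KH)
                (iso_inv_fix K Ki isoK a Ia Ka)) as Kir.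
  pose proof (iso_le K Ki isoK r (Ki r) Ir (iso_inv_maps isoK r Ir) Kir) as E.
  rewrite (iso_fg isoK) in E by exact Ir. lra.
Qed.

Lemma commute_right_end H Hi K Ki a q :
  order_iso_I H Hi -> order_iso_I K Ki -> commute_on_I H K ->
  in_I a -> in_I q -> a < q -> H a = a -> K q = q ->
  (forall y, a < y < q -> K y <> y) -> H q = q.
Proof.
  intros isoH isoK HK Ia Iq aq Ha Kq Kmoves.
  pose proof (commute_right_end_le H Hi K isoH HK a q Ia Iq aq Ha Kq Kmoves) as E1.
  pose proof (commute_right_end_le Hi H K (order_iso_I_sym H Hi isoH)
                (commute_on_I_inv H Hi K Ki isoH isoK HK) a q Ia Iq aq
                (iso_inv_fix H Hi isoH a Ia Ha) Kq Kmoves) as E2.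
  pose proof (iso_le H Hi isoH q (Hi q) Iq (iso_inv_maps isoH q Iq) E2) as E3.
  rewrite (iso_fg isoH) in E3 by exact Iq. lra.
Qed.

Lemma commute_left_end H Hi K Ki a B q :
  order_iso_I H Hi -> order_iso_I K Ki -> commute_on_I H K ->
  in_I a -> in_I q -> a <= B < q -> H a = a ->
  (forall y, a <= y <= B -> K y = y) -> (forall y, B < y < q -> K y <> y) ->
  H B = B.
Proof.
  intros isoH isoK HK Ia Iq aBq Ha Kfix Kmoves.
  assert (IB : in_I B) by (unfold in_I in *; lra).
  pose proof (commute_left_end_le H Hi K isoH HK a B q Ia Iq aBq Ha Kfix Kmoves) as E1.
  pose proof (commute_left_end_le Hi H K (order_iso_I_sym H Hi isoH)
                (commute_on_I_inv H Hi K Ki isoH isoK HK) a B q Ia Iq aBq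
                (iso_inv_fix H Hi isoH a Ia Ha) Kfix Kmoves) as E2.
  pose proof (iso_le H Hi isoH (Hi B) B (iso_inv_maps isoH B IB) IB E2) as E3.
  rewrite (iso_fg isoH) in E3 by exact IB. lra.
Qed.

Lemma commute_gap H Hi K Ki a y :
  order_iso_I H Hi -> order_iso_I K Ki -> commute_on_I H K ->
  in_I a -> in_I y -> K y = y -> H y <> y -> H a < y -> Hi a < y ->
  (forall z, in_I z -> K z = z -> z < y -> z < a) -> False.
Proof.
  intros isoH isoK HK Ia Iy Ky Hy Ha Hia gap.
  destruct (Rtotal_order (H y) y) as [E | [E | E]]; [| exact (Hy E) |].
  - exact (commute_gap_not_lt H Hi K isoH HK a y Ia Iy Ky Hia gap E).
  - apply (commute_gap_not_lt Hi H K (order_iso_I_sym H Hi isoH)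
             (commute_on_I_inv H Hi K Ki isoH isoK HK) a y Ia Iy Ky Ha gap).
    pose proof (iso_lt (order_iso_I_sym H Hi isoH) y (H y) Iy (iso_maps isoH y Iy) E) as E'.
    rewrite (iso_gf isoH) in E' by exact Iy. exact E'.
Qed.

Definition continuous_on_I (f : R -> R) : Prop :=
  forall t, in_I t -> forall eps, 0 < eps -> exists del, 0 < del /\
    forall y, in_I y -> Rabs (y - t) < del -> Rabs (f y - f t) < eps.

Record homeo_I (f g : R -> R) : Prop := {
  homeo_iso : order_iso_I f g;
  homeo_cont : continuous_on_I f }.

Arguments homeo_iso {f g}.

Definition clamp (t : R) : R := Rmax 0 (Rmin 1 t).

Lemma clamp_in_I t : in_I (clamp t).
Proof. unfold in_I, clamp, Rmax, Rmin; repeat destruct Rle_dec; lra. Qed.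

Lemma clamp_id t : in_I t -> clamp t = t.
Proof. unfold in_I, clamp, Rmax, Rmin; repeat destruct Rle_dec; lra. Qed.

Lemma Rabs_clamp_sub y t : Rabs (clamp y - clamp t) <= Rabs (y - t).
Proof.
  unfold clamp, Rmax, Rmin; repeat destruct Rle_dec;
  unfold Rabs; repeat destruct Rcase_abs; lra.
Qed.

Lemma continuous_on_I_clamp f : continuous_on_I f -> continuity (fun t => f (clamp t)).
Proof.
  intros cont x eps Heps.
  destruct (cont (clamp x) (clamp_in_I x) eps Heps) as [del [Hdel close]].
  exists del. split; [exact Hdel |]. intros y [_ Hyx]. simpl in *. unfold R_dist in *.
  apply close; [apply clamp_in_I |]. pose proof (Rabs_clamp_sub y x). lra.
Qed.

Lemma continuous_on_I_onto f : continuous_on_I f -> f 0 = 0 -> f 1 = 1 ->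
  forall t, in_I t -> exists s, in_I s /\ f s = t.
Proof.
  intros cont f0 f1 t It.
  destruct (Req_dec t 0) as [-> | t0]; [exists 0; split; [unfold in_I; lra | exact f0] |].
  destruct (Req_dec t 1) as [-> | t1]; [exists 1; split; [unfold in_I; lra | exact f1] |].
  destruct (IVT (fun x => f (clamp x) - t) 0 1) as [s [Hs Es]].
  - apply continuity_minus; [exact (continuous_on_I_clamp f cont) | apply continuity_const; now intros ? ?].
  - lra.
  - rewrite clamp_id, f0 by (unfold in_I; lra). unfold in_I in It. lra.
  - rewrite clamp_id, f1 by (unfold in_I; lra). unfold in_I in It. lra.
  - exists s. rewrite clamp_id in Es by exact Hs. split; [exact Hs | lra].
Qed.

Lemma breakpoint_right (p : nat -> R) k t :
  p 0%nat <= t -> t < p k -> exists i, (i < k)%nat /\ p i <= t < p (S i).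
Proof.
  intros t0 tk. induction k as [| k IH]; [lra |].
  destruct (Rlt_or_le t (p k)) as [E | E].
  - destruct (IH E) as [i [Hi Hti]]. exists i. split; [lia | exact Hti].
  - exists k. split; [lia | lra].
Qed.

Lemma breakpoint_left (p : nat -> R) k t :
  p 0%nat < t -> t <= p k -> exists i, (i < k)%nat /\ p i < t <= p (S i).
Proof.
  intros t0 tk. induction k as [| k IH]; [lra |].
  destruct (Rle_or_lt t (p k)) as [E | E].
  - destruct (IH E) as [i [Hi Hti]]. exists i. split; [lia | exact Hti].
  - exists k. split; [lia | lra].
Qed.

Lemma affine_piece_close f lo hi al be t eps :
  0 < eps -> (forall y, lo <= y <= hi -> f y = al * y + be) -> lo <= t <= hi ->
  exists d, 0 < d /\ forall y, lo <= y <= hi -> Rabs (y - t) < d -> Rabs (f y - f t) < eps.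
Proof.
  intros Heps aff Ht. exists (eps / (Rabs al + 1)).
  pose proof (Rabs_pos al) as al0.
  split; [apply Rdiv_lt_0_compat; lra |]. intros y Hy Hyt.
  rewrite (aff y Hy), (aff t Ht).
  replace (al * y + be - (al * t + be)) with (al * (y - t)) by ring.
  rewrite Rabs_mult. pose proof (Rabs_pos (y - t)).
  apply Rlt_le_trans with ((Rabs al + 1) * (eps / (Rabs al + 1))).
  - apply Rle_lt_trans with (Rabs al * Rabs (y - t)); [lra |].
    apply Rle_lt_trans with ((Rabs al + 1) * Rabs (y - t)); [nra |].
    apply Rmult_lt_compat_l; lra.
  - right. field. lra.
Qed.

Lemma PL0_continuous_on_I f : PL0 f -> continuous_on_I f.
Proof.
  intros (_ & _ & _ & k & p & p0 & pk & _ & aff) t It eps Heps.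
  assert (right : exists dR, 0 < dR /\
            forall y, in_I y -> t <= y < t + dR -> Rabs (f y - f t) < eps).
  { destruct (Rlt_or_le t 1) as [t1 | t1].
    - destruct (breakpoint_right p k t) as [i [Hi Hti]]; [unfold in_I in It; lra | lra |].
      destruct (aff i Hi) as [al [be Haff]].
      destruct (affine_piece_close f (p i) (p (S i)) al be t eps Heps Haff) as [d [Hd close]]; [lra |].
      exists (Rmin d (p (S i) - t)). split; [apply Rmin_pos; lra |].
      intros y _ Hy. pose proof (Rmin_l d (p (S i) - t)). pose proof (Rmin_r d (p (S i) - t)).
      apply close; [lra | rewrite Rabs_right; lra].
    - exists 1. split; [lra |]. intros y Iy Hy. unfold in_I in *.
      replace y with t by lra. rewrite Rminus_diag, Rabs_R0. lra. }
  assert (left : exists dL, 0 < dL /\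
            forall y, in_I y -> t - dL < y <= t -> Rabs (f y - f t) < eps).
  { destruct (Rlt_or_le 0 t) as [t0 | t0].
    - destruct (breakpoint_left p k t) as [i [Hi Hti]]; [lra | unfold in_I in It; lra |].
      destruct (aff i Hi) as [al [be Haff]].
      destruct (affine_piece_close f (p i) (p (S i)) al be t eps Heps Haff) as [d [Hd close]]; [lra |].
      exists (Rmin d (t - p i)). split; [apply Rmin_pos; lra |].
      intros y _ Hy. pose proof (Rmin_l d (t - p i)). pose proof (Rmin_r d (t - p i)).
      apply close; [lra | rewrite Rabs_left1; lra].
    - exists 1. split; [lra |]. intros y Iy Hy. unfold in_I in *.
      replace y with t by lra. rewrite Rminus_diag, Rabs_R0. lra. }
  destruct right as [dR [HdR closeR]], left as [dL [HdL closeL]].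
  exists (Rmin dR dL). split; [apply Rmin_pos; lra |].
  intros y Iy Hyt. pose proof (Rmin_l dR dL). pose proof (Rmin_r dR dL).
  destruct (Rle_or_lt t y).
  - apply closeR; [exact Iy |]. rewrite Rabs_right in Hyt; lra.
  - apply closeL; [exact Iy |]. rewrite Rabs_left in Hyt; lra.
Qed.

Lemma PL0_homeo_I f g : PL0 f -> inverse_on_I f g -> homeo_I f g.
Proof.
  intros pl inv. pose proof (PL0_continuous_on_I f pl) as cont.
  destruct pl as (f0 & f1 & mono & _).
  assert (mono_le : forall x y, in_I x -> in_I y -> x <= y -> f x <= f y).
  { intros x y Ix Iy [E | <-]; [left; apply mono; unfold in_I in *; lra | lra]. }
  split; [split | exact cont].
  - intros t It. split; [rewrite <- f0 | rewrite <- f1]; apply mono_le; unfold in_I in *; lra.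
  - intros t It. destruct (continuous_on_I_onto f cont f0 f1 t It) as [s [Is <-]].
    rewrite (proj1 (inv s Is)). exact Is.
  - intros t It. exact (proj2 (inv t It)).
  - intros t It. exact (proj1 (inv t It)).
  - intros x y Ix Iy Hxy. apply mono; unfold in_I in *; lra.
Qed.

Definition mirror (f : R -> R) (t : R) : R := 1 - f (1 - t).

Lemma one_minus_involutive x : 1 - (1 - x) = x.
Proof. ring. Qed.

Lemma in_I_one_minus t : in_I t -> in_I (1 - t).
Proof. unfold in_I. lra. Qed.

#[local] Hint Resolve in_I_one_minus : core.

Lemma continuous_on_I_mirror f : continuous_on_I f -> continuous_on_I (mirror f).
Proof.
  intros cont t It eps Heps.
  destruct (cont (1 - t) (in_I_one_minus t It) eps Heps) as [del [Hdel close]].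
  exists del. split; [exact Hdel |]. intros y Iy Hyt. unfold mirror.
  replace (1 - f (1 - y) - (1 - f (1 - t))) with (- (f (1 - y) - f (1 - t))) by ring.
  rewrite Rabs_Ropp. apply close; [auto |].
  replace (1 - y - (1 - t)) with (- (y - t)) by ring. rewrite Rabs_Ropp. exact Hyt.
Qed.

Lemma order_iso_I_mirror f g : order_iso_I f g -> order_iso_I (mirror f) (mirror g).
Proof.
  intros iso. unfold mirror. split; intros.
  - apply in_I_one_minus. eauto.
  - apply in_I_one_minus. eauto.
  - rewrite one_minus_involutive, (iso_fg iso); eauto. ring.
  - rewrite one_minus_involutive, (iso_gf iso); eauto. ring.
  - enough (f (1 - y) < f (1 - x)) by lra. apply (iso_lt iso); auto. lra.
Qed.

Lemma homeo_I_mirror f g : homeo_I f g -> homeo_I (mirror f) (mirror g).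
Proof.
  intros [iso cont]. split; [exact (order_iso_I_mirror f g iso) | exact (continuous_on_I_mirror f cont)].
Qed.

Lemma orbital_mirror f b d : orbital f b d -> orbital (mirror f) (1 - d) (1 - b).
Proof.
  unfold mirror. intros (b0 & bd & d1 & fb & fd & moves).
  repeat split; try lra.
  - rewrite one_minus_involutive, fd. ring.
  - rewrite one_minus_involutive, fb. ring.
  - intros x Hx E. apply (moves (1 - x)); lra.
Qed.

Lemma orbital_of_mirror f b d : orbital (mirror f) b d -> orbital f (1 - d) (1 - b).
Proof.
  unfold mirror. intros (b0 & bd & d1 & fb & fd & moves).
  repeat split; try lra.
  intros x Hx E. apply (moves (1 - x)); [lra |]. rewrite one_minus_involutive, E. ring.
Qed.

Lemma Un_cv_le_const u l M : (forall n, u n <= M) -> Un_cv u l -> l <= M.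
Proof.
  intros le cv. destruct (Rle_or_lt l M) as [E | E]; [exact E | exfalso].
  destruct (cv (l - M)) as [N HN]; [lra |].
  specialize (HN N (Nat.le_refl N)). specialize (le N).
  unfold R_dist in HN. rewrite Rabs_left in HN; lra.
Qed.

Lemma Un_cv_shift u l : Un_cv u l -> Un_cv (fun n => u (S n)) l.
Proof. intros cv eps Heps. destruct (cv eps Heps) as [N HN]. exists N. intros n Hn. apply HN. lia. Qed.

Lemma fixed_of_limits F u v l :
  continuity F -> Un_cv u l -> Un_cv v l -> (forall n, F (u n) = v n) -> F l = l.
Proof.
  intros cont cu cv E. apply (UL_sequence v); [| exact cv].
  intros eps Heps. destruct (continuity_seq F u l (cont l) cu eps Heps) as [N HN].
  exists N. intros n Hn. rewrite <- E. exact (HN n Hn).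
Qed.

(* Only one of F, G need be continuous: backward orbits of f are handled as forward orbits
   of mirror g, whose continuity is not available. *)
Lemma orbit_limit_up F G x :
  order_iso_I F G -> continuous_on_I F \/ continuous_on_I G -> in_I x -> x < F x ->
  exists d, x < d <= 1 /\ F d = d /\ forall t, x <= t < d -> F t <> t.
Proof.
  intros iso cont Ix Fx.
  set (u n := Nat.iter n F x).
  assert (uS : forall n, u (S n) = F (u n)) by reflexivity.
  assert (uI : forall n, in_I (u n)) by (induction n; [exact Ix | rewrite uS; eauto]).
  assert (u_incr : forall n, u n < u (S n)).
  { induction n; [exact Fx |]. rewrite !(uS (S n)). apply (iso_lt iso); eauto. }
  destruct (growing_cv u) as [d cv].
  { intros n. left. apply u_incr. }
  { exists 1. intros z [n ->]. apply uI. }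
  pose proof (growing_ineq u d (fun n => Rlt_le _ _ (u_incr n)) cv) as ud.
  assert (d1 : d <= 1) by (apply (Un_cv_le_const u d 1); [intros n; apply uI | exact cv]).
  assert (xd : x < d) by (pose proof (ud 1%nat); pose proof (u_incr 0%nat); simpl in *; lra).
  assert (Id : in_I d) by (unfold in_I in *; lra).
  exists d. split; [lra | split].
  - destruct cont as [contF | contG].
    + rewrite <- (clamp_id d Id) at 1.
      apply (fixed_of_limits _ u (fun n => u (S n)) d (continuous_on_I_clamp F contF) cv (Un_cv_shift u d cv)).
      intros n. rewrite clamp_id by apply uI. reflexivity.
    + assert (Gd : G (clamp d) = d).
      { apply (fixed_of_limits _ (fun n => u (S n)) u d (continuous_on_I_clamp G contG) (Un_cv_shift u d cv) cv).
        intros n. rewrite clamp_id by apply uI. rewrite uS. apply (iso_gf iso). apply uI. }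
      rewrite clamp_id in Gd by exact Id. rewrite <- Gd at 1. exact (iso_fg iso d Id).
  - intros t Ht Ft. assert (It : in_I t) by (unfold in_I in *; lra).
    assert (below : forall n, u n <= t).
    { induction n; [simpl; lra |]. rewrite uS, <- Ft. apply (iso_le F G iso); eauto. }
    pose proof (Un_cv_le_const u d t below cv). lra.
Qed.

Lemma orbital_around_up f g x :
  homeo_I f g -> in_I x -> x < f x -> exists b d, orbital f b d /\ b < x < d.
Proof.
  intros [iso cont] Ix fx.
  destruct (orbit_limit_up f g x iso (or_introl cont) Ix fx) as [d (xd & fd & d_free)].
  assert (gx : g x < x).
  { pose proof (iso_lt (order_iso_I_sym f g iso) x (f x) Ix (iso_maps iso x Ix) fx) as E.
    rewrite (iso_gf iso) in E by exact Ix. exact E. }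
  destruct (orbit_limit_up (mirror g) (mirror f) (1 - x)
              (order_iso_I_mirror g f (order_iso_I_sym f g iso))
              (or_intror (continuous_on_I_mirror f cont)) (in_I_one_minus x Ix))
    as [d' (xd' & gd' & d'_free)]; [unfold mirror; rewrite one_minus_involutive; lra |].
  unfold mirror in gd', d'_free.
  assert (fb : f (1 - d') = 1 - d').
  { assert (Ib : in_I (1 - d')) by (unfold in_I in *; lra).
    assert (gb : g (1 - d') = 1 - d') by lra.
    rewrite <- gb at 1. exact (iso_fg iso _ Ib). }
  exists (1 - d'), d. split; [| lra].
  repeat split; try (unfold in_I in *; lra).
  intros t Ht ft. destruct (Rle_or_lt x t) as [xt | tx]; [exact (d_free t (conj xt (proj2 Ht)) ft) |].
  assert (It : in_I t) by (unfold in_I in *; lra).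
  apply (d'_free (1 - t)); [lra |]. rewrite one_minus_involutive, (iso_inv_fix f g iso t It ft). ring.
Qed.

Lemma orbital_around f g x :
  homeo_I f g -> in_I x -> f x <> x -> exists b d, orbital f b d /\ b < x < d.
Proof.
  intros homeo Ix fx. destruct (Rtotal_order (f x) x) as [E | [E | E]]; [| contradiction |].
  - destruct (orbital_around_up (mirror f) (mirror g) (1 - x) (homeo_I_mirror f g homeo)
                (in_I_one_minus x Ix)) as [b [d [orb Hbd]]].
    { unfold mirror. rewrite one_minus_involutive. lra. }
    exists (1 - d), (1 - b). split; [exact (orbital_of_mirror f b d orb) | lra].
  - exact (orbital_around_up f g x homeo Ix E).
Qed.

Lemma Fstep_app_l p w1 w2 : Fstep w1 w2 -> Fstep (p ++ w1) (p ++ w2).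
Proof.
  intros step. destruct step as [q r l | q r | q r];
    rewrite (app_assoc p q r), (app_assoc p q (_ ++ r)); constructor.
Qed.

Lemma Fstep_app_r q w1 w2 : Fstep w1 w2 -> Fstep (w1 ++ q) (w2 ++ q).
Proof.
  intros step. destruct step as [p r l | p r | p r]; rewrite <- !app_assoc; constructor.
Qed.

Lemma Fequiv_app_l p w1 w2 : Fequiv w1 w2 -> Fequiv (p ++ w1) (p ++ w2).
Proof.
  induction 1; [apply rst_step, Fstep_app_l; assumption | apply rst_refl
    | apply rst_sym; assumption | eapply rst_trans; eassumption].
Qed.

Lemma Fequiv_app_r q w1 w2 : Fequiv w1 w2 -> Fequiv (w1 ++ q) (w2 ++ q).
Proof.
  induction 1; [apply rst_step, Fstep_app_r; assumption | apply rst_refl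
    | apply rst_sym; assumption | eapply rst_trans; eassumption].
Qed.

Lemma linv_involutive l : linv (linv l) = l.
Proof. destruct l as [x s]. unfold linv. simpl. rewrite Bool.negb_involutive. reflexivity. Qed.

Lemma Fequiv_cancel w q : Fequiv (winv w ++ w ++ q) q.
Proof.
  induction w as [| l w IH]; [apply rst_refl |].
  eapply rst_trans; [| exact IH].
  apply rst_sym, rst_step.
  replace (winv (l :: w) ++ (l :: w) ++ q) with (winv w ++ [linv l; linv (linv l)] ++ (w ++ q))
    by (rewrite linv_involutive; change (winv (l :: w)) with (winv w ++ [linv l]);
        rewrite <- app_assoc; reflexivity).
  apply Fstep_free.
Qed.

Lemma Fequiv_swap a b : Fequiv (wcomm a b) [] -> Fequiv (b ++ a) (a ++ b).
Proof.
  intros trivial. apply rst_sym, (Fequiv_app_r (b ++ a)) in trivial.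
  eapply rst_trans; [exact trivial |].
  replace (wcomm a b ++ b ++ a) with ((a ++ b ++ winv a) ++ winv b ++ b ++ a)
    by (unfold wcomm; rewrite <- !app_assoc; reflexivity).
  eapply rst_trans; [apply Fequiv_app_l, Fequiv_cancel |].
  replace ((a ++ b ++ winv a) ++ a) with ((a ++ b) ++ winv a ++ a ++ [])
    by (rewrite app_nil_r, <- !app_assoc; reflexivity).
  rewrite <- (app_nil_r (a ++ b)) at 2. apply Fequiv_app_l, Fequiv_cancel.
Qed.

Lemma relator1_trivial : Fequiv relator1 [].
Proof. apply rst_sym, rst_step. rewrite <- (app_nil_r relator1). exact (Fstep_rel1 [] []). Qed.

Lemma relator2_trivial : Fequiv relator2 [].
Proof. apply rst_sym, rst_step. rewrite <- (app_nil_r relator2). exact (Fstep_rel2 [] []). Qed.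

Definition represents_F (f0 g0 f1 g1 : R -> R) : Prop :=
  forall w1 w2, Fequiv w1 w2 -> forall t, in_I t ->
    eval_word f0 g0 f1 g1 w1 t = eval_word f0 g0 f1 g1 w2 t.

Lemma eval_word_app f0 g0 f1 g1 w1 w2 t :
  eval_word f0 g0 f1 g1 (w1 ++ w2) t = eval_word f0 g0 f1 g1 w2 (eval_word f0 g0 f1 g1 w1 t).
Proof. unfold eval_word. apply fold_left_app. Qed.

Lemma order_iso_I_ext f g f' g' :
  (forall t, in_I t -> f t = f' t) -> (forall t, in_I t -> g t = g' t) ->
  order_iso_I f g -> order_iso_I f' g'.
Proof.
  intros Ef Eg [fm gm fg gf lt]. split; intros.
  - rewrite <- Ef; auto.
  - rewrite <- Eg; auto.
  - rewrite <- Eg, <- Ef; auto.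
  - rewrite <- Ef, <- Eg; auto.
  - rewrite <- !Ef; auto.
Qed.

Lemma eval_word_order_iso f0 g0 f1 g1 w :
  order_iso_I f0 g0 -> order_iso_I f1 g1 ->
  order_iso_I (eval_word f0 g0 f1 g1 w) (eval_word f0 g0 f1 g1 (winv w)).
Proof.
  intros iso0 iso1.
  induction w as [| l w IH]; [split; unfold eval_word; simpl; auto |].
  assert (isol : order_iso_I (eval_letter f0 g0 f1 g1 l) (eval_letter f0 g0 f1 g1 (linv l))).
  { destruct l as [[|] [|]]; simpl; auto using order_iso_I_sym. }
  apply (order_iso_I_ext _ _ _ _ (fun t _ => eq_refl)
           (fun t _ => eq_sym (eval_word_app f0 g0 f1 g1 (winv w) [linv l] t))).
  exact (order_iso_I_comp _ _ _ _ isol IH).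
Qed.

Lemma eval_word_mirror f0 g0 f1 g1 w t :
  eval_word (mirror f0) (mirror g0) (mirror f1) (mirror g1) w t = mirror (eval_word f0 g0 f1 g1 w) t.
Proof.
  revert t. induction w as [| l w IH]; intros t.
  - unfold eval_word, mirror. simpl. ring.
  - change (eval_word (mirror f0) (mirror g0) (mirror f1) (mirror g1) w
              (eval_letter (mirror f0) (mirror g0) (mirror f1) (mirror g1) l t)
            = mirror (eval_word f0 g0 f1 g1 (l :: w)) t).
    rewrite IH. unfold mirror at 1.
    change (mirror (eval_word f0 g0 f1 g1 (l :: w)) t)
      with (1 - eval_word f0 g0 f1 g1 w (eval_letter f0 g0 f1 g1 l (1 - t))).
    do 2 f_equal. destruct l as [[|] [|]]; unfold mirror; simpl; ring.
Qed.

Lemma represents_F_mirror f0 g0 f1 g1 :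
  represents_F f0 g0 f1 g1 -> represents_F (mirror f0) (mirror g0) (mirror f1) (mirror g1).
Proof.
  intros rep w1 w2 E t It. rewrite !eval_word_mirror. unfold mirror.
  rewrite (rep w1 w2 E); auto.
Qed.

Lemma fixed_before_first_orbital f g a c b1 d1 :
  homeo_I f g -> in_I a -> f a = a -> orbital f b1 d1 -> a <= b1 -> d1 <= c ->
  (forall b d, orbital f b d -> a <= b -> d <= c -> b1 <= b) ->
  forall x, a <= x <= b1 -> f x = x.
Proof.
  intros homeo Ia fa (_ & b1d1 & d1_1 & fb1 & _ & _) ab1 d1c first x Hx.
  destruct (Req_dec x a) as [-> | xa]; [exact fa |].
  destruct (Req_dec x b1) as [-> | xb1]; [exact fb1 |].
  destruct (Req_dec (f x) x) as [fx | fx]; [exact fx | exfalso].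
  destruct (orbital_around f g x homeo) as [b [d [orb bxd]]]; [unfold in_I in *; lra | exact fx |].
  pose proof orb as (_ & _ & _ & _ & _ & moves).
  assert (d <= b1) by (destruct (Rle_or_lt d b1); [assumption | exfalso; apply (moves b1); [lra | exact fb1]]).
  assert (a <= b) by (destruct (Rle_or_lt a b); [assumption | exfalso; apply (moves a); [lra | exact fa]]).
  pose proof (first b d orb ltac:(lra) ltac:(lra)). lra.
Qed.

Definition wh : word := X0 ++ X1i.
Definition wk : word := wconj X1 X0.
Definition wk2 : word := wconj X1 (X0 ++ X0).

Lemma Fequiv_wk_wh : Fequiv (wk ++ wh) (wh ++ wk).
Proof. exact (Fequiv_swap wh wk relator1_trivial). Qed.

Lemma Fequiv_wk2_wh : Fequiv (wk2 ++ wh) (wh ++ wk2).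
Proof. exact (Fequiv_swap wh wk2 relator2_trivial). Qed.

Section UpBump.

Variables f0 g0 f1 g1 : R -> R.
Hypotheses (homeo0 : homeo_I f0 g0) (homeo1 : homeo_I f1 g1) (rep : represents_F f0 g0 f1 g1).

Local Notation ev := (eval_word f0 g0 f1 g1).

Let iso0 : order_iso_I f0 g0 := homeo_iso homeo0.
Let iso1 : order_iso_I f1 g1 := homeo_iso homeo1.
Let iso0' : order_iso_I g0 f0 := order_iso_I_sym f0 g0 iso0.
Let iso1' : order_iso_I g1 f1 := order_iso_I_sym f1 g1 iso1.
Let iso_ev w : order_iso_I (ev w) (ev (winv w)) := eval_word_order_iso f0 g0 f1 g1 w iso0 iso1.

Lemma commute_wh w : Fequiv (w ++ wh) (wh ++ w) -> commute_on_I (ev wh) (ev w).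
Proof.
  intros E t It. rewrite <- !eval_word_app. symmetry. exact (rep _ _ E t It).
Qed.

Lemma ev_wh_fix s : in_I s -> ev wh s = s <-> f0 s = f1 s.
Proof.
  intros Is. change (ev wh s) with (g1 (f0 s)). split; intros E.
  - rewrite <- E at 2. symmetry. exact (iso_fg iso1 _ (iso_maps iso0 s Is)).
  - rewrite E. exact (iso_gf iso1 s Is).
Qed.

Lemma ev_conj_fix w y : in_I y ->
  ev (wconj X1 w) y = y <-> f1 (ev (winv w) y) = ev (winv w) y.
Proof.
  intros Iy. unfold wconj. rewrite !eval_word_app. change (ev X1) with f1.
  pose proof (iso_ev w) as isow. assert (Iz : in_I (ev (winv w) y)) by eauto.
  split; intros E.
  - rewrite <- E at 2. symmetry. exact (iso_gf isow _ (iso_maps iso1 _ Iz)).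
  - rewrite E. exact (iso_fg isow y Iy).
Qed.

Variables a c r : R.
Hypotheses (up : up_bump f0 a c) (r_between : a < r < c) (r_eq : f0 r = f1 r)
  (r_min : forall s, a < s < c -> f0 s = f1 s -> r <= s).

Let Ia : in_I a. Proof. destruct up as [(? & ? & ? & _) _]. unfold in_I. lra. Qed.
Let Ic : in_I c. Proof. destruct up as [(? & ? & ? & _) _]. unfold in_I. lra. Qed.
Let f0a : f0 a = a. Proof. destruct up as [(_ & _ & _ & ? & _) _]. assumption. Qed.
Let g0a : g0 a = a. Proof. exact (iso_inv_fix f0 g0 iso0 a Ia f0a). Qed.

Lemma up_inv_between x : a < x < c -> a < g0 x < x.
Proof.
  intros Hx. assert (Ix : in_I x) by (unfold in_I in *; lra).
  split.
  - rewrite <- g0a at 1. apply (iso_lt iso0'); auto. lra.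
  - apply (iso_lt_rev f0 g0 iso0); eauto. rewrite (iso_fg iso0) by exact Ix.
    destruct up as [_ mv]. apply mv. exact Hx.
Qed.

Lemma h_fix_r : ev wh r = r.
Proof. apply ev_wh_fix; [unfold in_I in *; lra | exact r_eq]. Qed.

Lemma h_moves_below_r s : a < s < r -> ev wh s <> s.
Proof.
  intros Hs E. apply ev_wh_fix in E; [| unfold in_I in *; lra].
  pose proof (r_min s ltac:(lra) E). lra.
Qed.

Lemma no_f1_orbital_from_a d1 : ~ orbital f1 a d1.
Proof.
  intros (_ & ad1 & d1_1 & f1a & f1d1 & moves).
  assert (Id1 : in_I d1) by (unfold in_I in *; lra).
  set (q := f0 d1).
  assert (Iq : in_I q) by (unfold q; eauto).
  assert (aq : a < q) by (rewrite <- f0a; exact (iso_lt iso0 a d1 Ia Id1 ad1)).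
  assert (g0q : g0 q = d1) by exact (iso_gf iso0 d1 Id1).
  assert (ha : ev wh a = a) by (apply ev_wh_fix; [exact Ia | congruence]).
  assert (kq : ev wk q = q) by (apply ev_conj_fix; [exact Iq | change (f1 (g0 q) = g0 q); congruence]).
  assert (k_moves : forall y, a < y < q -> ev wk y <> y).
  { intros y Hy E. assert (Iy : in_I y) by (unfold in_I in *; lra).
    apply ev_conj_fix in E; [| exact Iy]. change (f1 (g0 y) = g0 y) in E.
    apply (moves (g0 y)); [| exact E]. split.
    - rewrite <- g0a. apply (iso_lt iso0'); auto. lra.
    - rewrite <- g0q. apply (iso_lt iso0'); auto. lra. }
  assert (hq : ev wh q = q)
    by exact (commute_right_end _ _ _ _ a q (iso_ev wh) (iso_ev wk) (commute_wh wk Fequiv_wk_wh)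
                Ia Iq aq ha kq k_moves).
  assert (rq : r <= q).
  { destruct (Rle_or_lt r q) as [E | E]; [exact E | exfalso]. exact (h_moves_below_r q ltac:(lra) hq). }
  assert (k2a : ev wk2 a = a).
  { apply ev_conj_fix; [exact Ia |]. change (f1 (g0 (g0 a)) = g0 (g0 a)). rewrite !g0a. exact f1a. }
  assert (k2r : ev wk2 r = r)
    by exact (commute_fixes_end _ _ _ _ a r (iso_ev wh) (iso_ev wk2) (commute_wh wk2 Fequiv_wk2_wh)
                Ia ltac:(unfold in_I in *; lra) (proj1 r_between) h_fix_r k2a h_moves_below_r).
  apply ev_conj_fix in k2r; [| unfold in_I in *; lra]. change (f1 (g0 (g0 r)) = g0 (g0 r)) in k2r.
  destruct (up_inv_between r) as [ag0r g0rr]; [lra |].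
  destruct (up_inv_between (g0 r)) as [ag0g0r g0g0r]; [lra |].
  assert (g0r_d1 : g0 r <= d1)
    by (rewrite <- g0q; apply (iso_le g0 f0 iso0'); [unfold in_I in *; lra | exact Iq | exact rq]).
  apply (moves (g0 (g0 r))); [lra | exact k2r].
Qed.

Lemma first_orbital_after_fixed_a b1 d1 :
  orbital f1 b1 d1 -> a < b1 -> d1 <= c -> (forall x, a <= x <= b1 -> f1 x = x) -> r <= f0 b1.
Proof.
  intros (_ & b1d1 & d1_1 & f1b1 & f1d1 & moves) ab1 d1c f1_fixed.
  destruct (Rle_or_lt r (f0 b1)) as [E | B_r]; [exact E | exfalso].
  assert (Ib1 : in_I b1) by (unfold in_I in *; lra).
  assert (Id1 : in_I d1) by (unfold in_I in *; lra).
  set (B := f0 b1) in *. set (q := f0 d1).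
  assert (IB : in_I B) by (unfold B; eauto).
  assert (Iq : in_I q) by (unfold q; eauto).
  assert (b1B : b1 < B) by (destruct up as [_ mv]; apply mv; lra).
  assert (Bq : B < q) by exact (iso_lt iso0 b1 d1 Ib1 Id1 b1d1).
  assert (g0B : g0 B = b1) by exact (iso_gf iso0 b1 Ib1).
  assert (g0q : g0 q = d1) by exact (iso_gf iso0 d1 Id1).
  assert (ha : ev wh a = a) by (apply ev_wh_fix; [exact Ia | rewrite f0a, f1_fixed; lra]).
  assert (k_fixed : forall y, a <= y <= B -> ev wk y = y).
  { intros y Hy. assert (Iy : in_I y) by (unfold in_I in *; lra).
    apply ev_conj_fix; [exact Iy |]. change (f1 (g0 y) = g0 y). apply f1_fixed. split.
    - rewrite <- g0a. apply (iso_le g0 f0 iso0'); [exact Ia | exact Iy | lra].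
    - rewrite <- g0B. apply (iso_le g0 f0 iso0'); [exact Iy | exact IB | lra]. }
  assert (k_moves : forall y, B < y < q -> ev wk y <> y).
  { intros y Hy E. assert (Iy : in_I y) by (unfold in_I in *; lra).
    apply ev_conj_fix in E; [| exact Iy]. change (f1 (g0 y) = g0 y) in E.
    apply (moves (g0 y)); [| exact E]. split.
    - rewrite <- g0B. apply (iso_lt iso0'); auto. lra.
    - rewrite <- g0q. apply (iso_lt iso0'); auto. lra. }
  pose proof (commute_left_end _ _ _ _ a B q (iso_ev wh) (iso_ev wk) (commute_wh wk Fequiv_wk_wh)
                Ia Iq ltac:(lra) ha k_fixed k_moves) as hB.
  exact (h_moves_below_r B ltac:(lra) hB).
Qed.

Lemma first_orbital_after_moved_a b1 d1 :
  f1 a <> a -> orbital f1 b1 d1 -> a <= b1 -> d1 <= c -> r <= f0 b1.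
Proof.
  intros f1a (_ & b1d1 & d1_1 & f1b1 & _ & _) ab1 d1c.
  destruct (Rle_or_lt r (f0 b1)) as [E | B_r]; [exact E | exfalso].
  destruct (orbital_around f1 g1 a homeo1 Ia f1a) as [u [v [(_ & _ & v1 & _ & f1v & moves) uav]]].
  assert (v_b1 : v <= b1).
  { destruct (Rle_or_lt v b1) as [E | E]; [exact E | exfalso]. apply (moves b1); [lra | exact f1b1]. }
  assert (Iv : in_I v) by (unfold in_I in *; lra).
  assert (Ib1 : in_I b1) by (unfold in_I in *; lra).
  set (y := f0 v).
  assert (Iy : in_I y) by (unfold y; eauto).
  assert (vy : v < y) by (destruct up as [_ mv]; apply mv; lra).
  assert (y_r : y < r) by (pose proof (iso_le f0 g0 iso0 v b1 Iv Ib1 v_b1); unfold y; lra).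
  assert (g0y : g0 y = v) by exact (iso_gf iso0 v Iv).
  assert (ky : ev wk y = y) by (apply ev_conj_fix; [exact Iy | change (f1 (g0 y) = g0 y); congruence]).
  assert (ha : ev wh a < y).
  { change (g1 (f0 a) < y). rewrite f0a.
    pose proof (iso_lt iso1' a v Ia Iv ltac:(lra)). pose proof (iso_inv_fix f1 g1 iso1 v Iv f1v). lra. }
  assert (hia : ev (winv wh) a < y).
  { change (g0 (f1 a) < y).
    assert (f1a_v : f1 a < v) by (rewrite <- f1v; exact (iso_lt iso1 a v Ia Iv ltac:(lra))).
    pose proof (iso_lt iso0' (f1 a) v (iso_maps iso1 a Ia) Iv f1a_v).
    pose proof (up_inv_between v ltac:(lra)). lra. }
  apply (commute_gap _ _ _ _ a y (iso_ev wh) (iso_ev wk) (commute_wh wk Fequiv_wk_wh)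
           Ia Iy ky (h_moves_below_r y ltac:(lra)) ha hia).
  intros z Iz kz zy. destruct (Rlt_or_le z a) as [E | az]; [exact E | exfalso].
  apply ev_conj_fix in kz; [| exact Iz]. change (f1 (g0 z) = g0 z) in kz.
  apply (moves (g0 z)); [| exact kz]. split.
  - pose proof (iso_le g0 f0 iso0' a z Ia Iz az). lra.
  - rewrite <- g0y. exact (iso_lt iso0' z y Iz Iy zy).
Qed.

Lemma up_bump_first_orbital b1 d1 :
  orbital f1 b1 d1 -> a <= b1 -> d1 <= c ->
  (forall b d, orbital f1 b d -> a <= b -> d <= c -> b1 <= b) -> f0 b1 >= r.
Proof.
  intros orb ab1 d1c first. apply Rle_ge.
  destruct (Req_dec (f1 a) a) as [f1a | f1a].
  - destruct (Req_dec b1 a) as [-> | b1a]; [exfalso; exact (no_f1_orbital_from_a d1 orb) |].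
    apply (first_orbital_after_fixed_a b1 d1 orb ltac:(lra) d1c).
    exact (fixed_before_first_orbital f1 g1 a c b1 d1 homeo1 Ia f1a orb ab1 d1c first).
  - exact (first_orbital_after_moved_a b1 d1 f1a orb ab1 d1c).
Qed.

End UpBump.

Lemma down_bump_last_orbital f0 g0 f1 g1 a c r bn dn :
  homeo_I f0 g0 -> homeo_I f1 g1 -> represents_F f0 g0 f1 g1 ->
  down_bump f0 a c -> a < r < c -> f0 r = f1 r ->
  (forall s, a < s < c -> f0 s = f1 s -> s <= r) ->
  orbital f1 bn dn -> a <= bn -> dn <= c ->
  (forall b d, orbital f1 b d -> a <= b -> d <= c -> d <= dn) -> f0 dn <= r.
Proof.
  intros homeo0 homeo1 rep [orb_ac down] r_between r_eq r_max orb abn dnc last.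
  enough (E : mirror f0 (1 - dn) >= 1 - r)
    by (unfold mirror in E; rewrite one_minus_involutive in E; lra).
  apply (up_bump_first_orbital (mirror f0) (mirror g0) (mirror f1) (mirror g1)
           (homeo_I_mirror f0 g0 homeo0) (homeo_I_mirror f1 g1 homeo1) (represents_F_mirror f0 g0 f1 g1 rep)
           (1 - c) (1 - a) (1 - r)) with (d1 := 1 - bn); try lra.
  - split; [exact (orbital_mirror f0 a c orb_ac) |].
    intros x Hx. unfold mirror. pose proof (down (1 - x) ltac:(lra)). lra.
  - unfold mirror. rewrite one_minus_involutive, r_eq. reflexivity.
  - intros s Hs E. unfold mirror in E. pose proof (r_max (1 - s) ltac:(lra) ltac:(lra)). lra.
  - exact (orbital_mirror f1 bn dn orb).
  - intros b d orb' Hb Hd. pose proof (last _ _ (orbital_of_mirror f1 b d orb') ltac:(lra) ltac:(lra)). lra.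
Qed.

Theorem lemma2p10 (f0 g0 f1 g1 : R -> R) :
  PL0 f0 -> PL0 f1 -> inverse_on_I f0 g0 -> inverse_on_I f1 g1 ->
  standard_F_copy f0 g0 f1 g1 ->
  forall a c : R, orbital f0 a c ->
  (up_bump f0 a c ->
   forall b1 d1 r : R,
     orbital f1 b1 d1 -> a <= b1 -> d1 <= c ->
     (forall b d, orbital f1 b d -> a <= b -> d <= c -> b1 <= b) ->
     a < r < c -> f0 r = f1 r ->
     (forall s, a < s < c -> f0 s = f1 s -> r <= s) ->
     f0 b1 >= r) /\
  (down_bump f0 a c ->
   forall bn dn r : R,
     orbital f1 bn dn -> a <= bn -> dn <= c ->
     (forall b d, orbital f1 b d -> a <= b -> d <= c -> d <= dn) ->
     a < r < c -> f0 r = f1 r ->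
     (forall s, a < s < c -> f0 s = f1 s -> s <= r) ->
     f0 dn <= r).
Proof.
  intros pl0 pl1 inv0 inv1 copy a c _.
  pose proof (PL0_homeo_I f0 g0 pl0 inv0) as homeo0.
  pose proof (PL0_homeo_I f1 g1 pl1 inv1) as homeo1.
  assert (rep : represents_F f0 g0 f1 g1) by (intros w1 w2 E; exact (proj1 (copy w1 w2) E)).
  split.
  - intros up b1 d1 r orb ab1 d1c first r_between r_eq r_min.
    exact (up_bump_first_orbital f0 g0 f1 g1 homeo0 homeo1 rep a c r up r_between r_eq r_min
             b1 d1 orb ab1 d1c first).
  - intros down bn dn r orb abn dnc last r_between r_eq r_max.
    exact (down_bump_last_orbital f0 g0 f1 g1 a c r bn dn homeo0 homeo1 rep down r_between r_eq r_max
             orb abn dnc last).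
Qed.
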